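(* For any connected graph $G$ with vertex set $\{u_1,\dots,u_n\}$, $n\ge2$, and any family $\mathcal{H}=\{H_1,\dots,H_n\}$ of graphs, $\dim_l(G\circ\mathcal{H})\ge\dim_l(G)$. Moreover, if every $H_i$ is an edgeless graph, then $\dim_l(G\circ\mathcal{H})=\dim_l(G)$.
   Context: All graphs are finite and simple with at least one vertex. For a connected graph $G$, $\dim_l(G)$ is the minimum size of $S\subseteq V(G)$ such that for every two adjacent vertices $x,y$ there is $s\in S$ with $d_G(s,x)\ne d_G(s,y)$ ($d_G$ the shortest-path distance). Lexicographic product $G\circ\mathcal{H}$: vertex set $\bigcup_i\{u_i\}\times V(H_i)$, $(u_i,v)\sim(u_j,w)$ iff $u_iu_j\in E(G)$, or $i=j$ and $vw\in E(H_i)$. *)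

From mathcomp Require Import all_boot.
Set Implicit Arguments. Unset Strict Implicit. Unset Printing Implicit Defensive.

Section Graphs.
Variable T : finType.
Implicit Types (e : rel T).

Definition simple_graph e := symmetric e /\ irreflexive e.

Definition connected_graph e := forall x y : T, connect e x y.

Fixpoint ball e (k : nat) (x : T) : {set T} :=
  if k is k'.+1 then
    ball e k' x :|: [set y | [exists z in ball e k' x, e z y]]
  else [set x].

(* shortest-path distance: least k with y within k steps of x
   (correct whenever y is reachable from x; #|T| otherwise) *)
Definition dist e (x y : T) : nat :=
  find (fun k => y \in ball e k x) (iota 0 #|T|).

Definition local_resolving e (S : {set T}) : bool :=
  [forall x : T, forall y : T,
     e x y ==> [exists s in S, dist e s x != dist e s y]].

Definition ldim e : nat :=
  \big[minn/#|T|]_(S : {set T} | local_resolving e S) #|S|.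
End Graphs.

(* lexicographic product G o H, vertices (u_i, v) with v in V(H_i) *)
Definition lexprod (T : finType) (V : T -> finType) (e : rel T)
  (eH : forall i, rel (V i)) : rel {i : T & V i} :=
  fun x y => e (tag x) (tag y) ||
             ((tag x == tag y) && eH (tag x) (tagged x) (tagged_as x y)).

From mathcomp Require Import all_boot.
Set Implicit Arguments. Unset Strict Implicit. Unset Printing Implicit Defensive.

(* Choosing a vertex c i in every fibre V i, a shortest path between different
   fibres of G o H is a shortest path of G lifted through the representatives,
   so distances between vertices of different fibres are distances in G.  Hence
   the projection of a local resolving set of G o H is a local resolving set of
   G.  Conversely, if every H_i is edgeless, adjacent vertices of G o H lie in
   adjacent fibres, and the representatives of a local resolving set of G
   resolve them: the representative in the fibre of x is at distance 1 from y,
   but not from x, which has no neighbour in its own fibre. *)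

Lemma find_iota_widen (P : pred nat) m n k : k < m -> P k -> m <= n ->
  find P (iota 0 n) = find P (iota 0 m).
Proof.
move=> km Pk mn; rewrite -(subnKC mn) iotaD find_cat.
suff -> : has P (iota 0 m) by [].
by apply/hasP; exists k; rewrite ?mem_iota.
Qed.

Section Graph.
Variables (T : finType) (e : rel T).

Lemma mem_ball_center k x : x \in ball e k x.
Proof. by elim: k => [|k IH] /=; rewrite !inE ?IH. Qed.

Lemma mem_ball_last x p : path e x p -> last x p \in ball e (size p) x.
Proof.
elim/last_ind: p => [|p z IH] /=; first by rewrite inE.
rewrite rcons_path last_rcons size_rcons => /andP [ep epz] /=.
by rewrite !inE; apply/orP; right; apply/existsP; exists (last x p); rewrite IH.
Qed.

Lemma connect_ball x y : connect e x y -> exists2 k, k < #|T| & y \in ball e k x.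
Proof.
case/connectP=> p ep ->; have [q eq uq _] := shortenP ep.
exists (size q); last exact: mem_ball_last.
by have := max_card (mem (x :: q)); rewrite (card_uniqP uq).
Qed.

Lemma dist_eq0 x y : (dist e x y == 0) = (x == y).
Proof.
have : 0 < #|T| by apply/card_gt0P; exists x.
by rewrite /dist; case: #|T| => // n _ /=; rewrite inE [x == y]eq_sym; case: (y == x).
Qed.

Lemma dist_xx x : dist e x x = 0.
Proof. by apply/eqP; rewrite dist_eq0. Qed.

Lemma dist_eq1 x y : 1 < #|T| -> irreflexive e -> (dist e x y == 1) = e x y.
Proof.
move=> hT ie; rewrite /dist; case: #|T| hT => [|[|n]] // _ /=.
rewrite !inE; have [->|yx] /= := eqVneq y x; first by rewrite ie.
have -> : [exists z in [set x], e z y] = e x y.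
  by apply/existsP/idP => [[z /andP [/set1P -> //]]|exy]; exists x; rewrite set11.
by case: (e x y).
Qed.

Lemma local_resolving_setT : irreflexive e -> local_resolving e setT.
Proof.
move=> ie; apply/forallP=> x; apply/forallP=> y; apply/implyP=> exy.
apply/existsP; exists x; rewrite inE dist_xx eq_sym dist_eq0.
by apply: contraTneq exy => ->; rewrite ie.
Qed.

Lemma ldim_le_card S : local_resolving e S -> ldim e <= #|S|.
Proof.
move=> hS; rewrite /ldim; have : S \in index_enum {set T} by rewrite mem_index_enum.
elim: (index_enum _) => //= R r IH; rewrite inE big_cons.
case/orP => [/eqP <-|/IH le_r]; first by rewrite hS geq_minl.
by case: ifP => _; rewrite ?geq_min le_r ?orbT.
Qed.

Lemma ldim_le_cardT : ldim e <= #|T|.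
Proof.
rewrite /ldim; elim/big_ind: _ => // [a b ha _|S _]; first by rewrite geq_min ha.
exact: max_card.
Qed.

Lemma ldim_ge m : m <= #|T| ->
  (forall S, local_resolving e S -> m <= #|S|) -> m <= ldim e.
Proof.
move=> mT mS; rewrite /ldim; elim/big_ind: _ => // a b ha hb.
by rewrite leq_min ha hb.
Qed.

End Graph.

Section LexprodDistance.
Variables (T : finType) (e : rel T) (V : T -> finType) (eH : forall i, rel (V i)).
Variable c : forall i, V i.
Local Notation L := (lexprod e eH).
Local Notation lift i := (Tagged V (c i)).

Lemma leq_card_lexprod : #|T| <= #|{: {i : T & V i}}|.
Proof. by apply: (leq_card (fun i => lift i)) => i j /(congr1 tag). Qed.

Lemma lexprod_irreflexive :
  irreflexive e -> (forall i, irreflexive (@eH i)) -> irreflexive L.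
Proof. by move=> ie iH [i u]; rewrite /lexprod /= ie eqxx /= tagged_asE iH. Qed.

Lemma mem_ball_tag k x y : y \in ball L k x -> tag y \in ball e k (tag x).
Proof.
elim: k y => [|k IH] y /=; first by rewrite !inE => /eqP ->.
rewrite !inE => /orP [/IH -> //|/existsP [z /andP [zb Lzy]]].
apply/orP; case/orP: Lzy => [ezy|/andP [/eqP <- _]]; last by left; apply: IH.
by right; apply/existsP; exists (tag z); rewrite IH.
Qed.

(* Paths of G are lifted through the representatives [c i]. *)
Lemma mem_ball_lexprod k x y : tag x != tag y ->
  (y \in ball L k x) = (tag y \in ball e k (tag x)).
Proof.
move=> xy; apply/idP/idP; first exact: mem_ball_tag.
elim: k y xy => [|k IH] y xy /=; first by rewrite inE => /eqP yx; rewrite yx eqxx in xy.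
rewrite !inE => /orP [/IH -> //|/existsP [i /andP [ib eiy]]].
apply/orP; right; apply/existsP; have [xi|xi] := eqVneq (tag x) i.
  by rewrite -xi in eiy; exists x; rewrite mem_ball_center /lexprod eiy.
by exists (lift i); rewrite IH //= /lexprod /= eiy.
Qed.

Lemma dist_lexprod x y : connected_graph e -> tag x != tag y ->
  dist L x y = dist e (tag x) (tag y).
Proof.
move=> conn xy; rewrite /dist (eq_find (a2 := fun k => tag y \in ball e k (tag x))).
  have [k kT hk] := connect_ball (conn (tag x) (tag y)).
  exact: find_iota_widen kT hk leq_card_lexprod.
by move=> k; apply: mem_ball_lexprod.
Qed.

End LexprodDistance.

Section LocalResolving.
Variables (T : finType) (e : rel T) (V : T -> finType) (eH : forall i, rel (V i)).
Variable c : forall i, V i.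
Hypotheses (ie : irreflexive e) (conn : connected_graph e).
Local Notation L := (lexprod e eH).
Local Notation lift i := (Tagged V (c i)).

Lemma local_resolving_tag S : local_resolving L S -> local_resolving e (tag @: S).
Proof.
move/forallP=> resS; apply/forallP=> i; apply/forallP=> j; apply/implyP=> eij.
have Lij : L (lift i) (lift j) by rewrite /lexprod /= eij.
have /existsP [s /andP [sS hs]] := implyP (forallP (resS _) _) Lij.
apply/existsP; exists (tag s); rewrite imset_f //=.
have ij : i != j by apply: contraTneq eij => ->; rewrite ie.
have [->|si] := eqVneq (tag s) i; first by rewrite dist_xx eq_sym dist_eq0.
have [->|sj] := eqVneq (tag s) j; first by rewrite dist_xx dist_eq0 eq_sym.
by rewrite !(dist_lexprod eH c) //= in hs.
Qed.

Lemma ldim_lexprod_ge : ldim e <= ldim L.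
Proof.
apply: ldim_ge; first exact: leq_trans (ldim_le_cardT e) (leq_card_lexprod c).
move=> S /local_resolving_tag/ldim_le_card/leq_trans; apply.
exact: leq_imset_card.
Qed.

Section Edgeless.
Hypotheses (se : symmetric e) (hT : 1 < #|T|) (edgelessH : forall i (u v : V i), ~~ eH u v).

Lemma dist_lift_neq x y : e (tag x) (tag y) ->
  dist L (lift (tag x)) x != dist L (lift (tag x)) y.
Proof.
move=> exy; have xy : tag x != tag y by apply: contraTneq exy => ->; rewrite ie.
have iL : irreflexive L.
  by apply: lexprod_irreflexive => // i u; exact: negbTE (edgelessH u u).
have hL : 1 < #|{: {i : T & V i}}| := leq_trans hT (leq_card_lexprod c).
have /eqP d1 : dist e (tag x) (tag y) == 1 by rewrite dist_eq1.
rewrite [X in _ != X](dist_lexprod eH c) //= d1 dist_eq1 //.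
by rewrite /lexprod /= ie (negbTE (edgelessH _ _)) andbF.
Qed.

Lemma local_resolving_lift S :
  local_resolving e S -> local_resolving L [set lift i | i in S].
Proof.
move/forallP=> resS; apply/forallP=> x; apply/forallP=> y; apply/implyP.
rewrite /lexprod (negbTE (edgelessH _ _)) andbF orbF => exy.
have /existsP [i /andP [iS hi]] := implyP (forallP (resS (tag x)) (tag y)) exy.
apply/existsP; exists (lift i); apply/andP; split; first exact: imset_f.
have [->|ix] := eqVneq i (tag x); first exact: dist_lift_neq.
have [->|iy] := eqVneq i (tag y); first by rewrite eq_sym dist_lift_neq // se.
by rewrite !(dist_lexprod eH c) // eq_sym.
Qed.

Lemma ldim_lexprod_edgeless : ldim L <= ldim e.
Proof.
have le_card S : local_resolving e S -> ldim L <= #|S|.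
  by move/local_resolving_lift/ldim_le_card/leq_trans; apply; exact: leq_imset_card.
apply: ldim_ge => //; rewrite -cardsT; exact/le_card/local_resolving_setT.
Qed.

End Edgeless.
End LocalResolving.

Theorem mainTheorem7 (T : finType) (e : rel T) (V : T -> finType)
  (eH : forall i, rel (V i)) :
  simple_graph e -> connected_graph e -> 1 < #|T| ->
  (forall i, 0 < #|V i|) -> (forall i, simple_graph (eH i)) ->
  ldim e <= ldim (lexprod e eH) /\
  ((forall i (u v : V i), ~~ eH i u v) -> ldim (lexprod e eH) = ldim e).
Proof.
move=> [se ie] conn hT hV _.
pose c i := xchoose (elimT card_gt0P (hV i)).
have ge_ldim := ldim_lexprod_ge eH c ie conn.
split=> // edgelessH; apply/eqP; rewrite eqn_leq ge_ldim andbT.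
exact: ldim_lexprod_edgeless.
Qed.
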